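(* Let $z\in\mathbb C^d_\Delta$. The orbit $Az$ is closed in $\mathbb C^d_\Delta$ if and only if there exists a face $F$ of $\Delta$ such that $z\in(\mathbb C^* )^{F^c}$. Moreover, if $Az$ is not closed, then its closure in $\mathbb C^d_\Delta$ contains one and only one closed $A$-orbit.
   Context: Let $\mathfrak d$ be an $n$-dimensional real vector space, $\mathfrak d^*$ its dual. A quasilattice in $\mathfrak d$ is the $\mathbb Z$-submodule generated by a finite set of vectors spanning $\mathfrak d$. Let $\Delta\subset\mathfrak d^*$ be an $n$-dimensional convex polytope (not necessarily rational or simple) with $d$ facets, written as $\Delta=\bigcap_{j=1}^d\{\mu\in\mathfrak d^*:\langle\mu,X_j\rangle\ge\lambda_j\}$, where $X_1,\dots,X_d\in\mathfrak d$ are chosen inward-pointing normals to the facets and $\lambda_j\in\mathbb R$; let $Q$ be a quasilattice containing $X_1,\dots,X_d$. For each (relatively open) face $F$ of $\Delta$ let $I_F\subseteq\{1,\dots,d\}$ be such that $F=\{\mu\in\Delta:\langle\mu,X_j\rangle=\lambda_j\iff j\in I_F\}$ (the interior of $\Delta$ is the face with $I_F=\emptyset$). For $J\subseteq\{1,\dots,d\}$ and $\mathbb K\in\{\mathbb C,\mathbb C^*\}$ put $\mathbb K^J=\{z\in\mathbb C^d: z_j\in\mathbb K\ (j\in J),\ z_j=0\ (j\notin J)\}$; write $\mathbb K^F=\mathbb K^{I_F}$, $\mathbb K^{F^c}=\mathbb K^{\{1,\dots,d\}\setminus I_F}$, and $\mathbb C^F\times(\mathbb C^* )^{F^c}=\{z\in\mathbb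 C^d: z_j\ne0\text{ for all }j\notin I_F\}$. Let $\mathbb C^d_\Delta=\bigcup_F\mathbb C^F\times(\mathbb C^* )^{F^c}$, the union over all faces of $\Delta$ (an open subset of $\mathbb C^d$). Let $\pi:\mathbb R^d\to\mathfrak d$ be the linear map with $e_j\mapsto X_j$ and $\mathfrak n=\ker\pi$. Let $A=\{\exp(iY):Y\in\mathfrak n\}$, acting on $\mathbb C^d$ by $\exp(iY)\cdot z=(e^{-2\pi Y_1}z_1,\dots,e^{-2\pi Y_d}z_d)$. *)

From Stdlib Require Import Reals List.
Import ListNotations.
Open Scope R_scope.

Definition fsum (n : nat) (f : nat -> R) : R :=
  fold_right Rplus 0 (map f (seq 0 n)).

(* Vectors of R^n (resp. d^* = R^n, d = R^n) are functions nat -> R,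
   only coordinates k < n are meaningful. *)
Definition pairing (n : nat) (mu X : nat -> R) : R := fsum n (fun k => mu k * X k).

Definition inDelta (n d : nat) (X : nat -> nat -> R) (lam : nat -> R) (mu : nat -> R) : Prop :=
  forall j, (j < d)%nat -> pairing n mu (X j) >= lam j.

Definition activeSet (n d : nat) (X : nat -> nat -> R) (lam : nat -> R)
  (I : nat -> Prop) (mu : nat -> R) : Prop :=
  inDelta n d X lam mu /\
  forall j, (j < d)%nat -> (pairing n mu (X j) = lam j <-> I j).

(* I = I_F for a (relatively open, nonempty) face F of Delta:
   F = { mu in Delta | <mu,X_j> = lam_j <-> j in I } is nonempty. *)
Definition isFaceIndex (n d : nat) (X : nat -> nat -> R) (lam : nat -> R) (I : nat -> Prop) : Prop :=
  exists mu, activeSet n d X lam I mu.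

Definition isPolytopeData (n d : nat) (X : nat -> nat -> R) (lam : nat -> R) : Prop :=
  (exists M, forall mu, inDelta n d X lam mu -> forall k, (k < n)%nat -> Rabs (mu k) <= M) /\
  (* n-dimensional: has an interior point *)
  isFaceIndex n d X lam (fun _ => False) /\
  (* each j < d gives a facet (distinct, irredundant) *)
  (forall j, (j < d)%nat -> isFaceIndex n d X lam (fun i => i = j)).

(* Complex numbers as pairs of reals; points of C^d are functions
   nat -> C, only coordinates j < d are meaningful. *)
Definition C : Type := (R * R)%type.
Definition Cpoint : Type := nat -> C.
Definition Cnz (c : C) : Prop := c <> (0, 0).
Definition Cscale (t : R) (c : C) : C := (t * fst c, t * snd c).

Definition inCF_CstarFc (d : nat) (I : nat -> Prop) (z : Cpoint) : Prop :=
  forall j, (j < d)%nat -> ~ I j -> Cnz (z j).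

Definition inCdDelta (n d : nat) (X : nat -> nat -> R) (lam : nat -> R) (z : Cpoint) : Prop :=
  exists I, isFaceIndex n d X lam I /\ inCF_CstarFc d I z.

Definition inCstarFc (d : nat) (I : nat -> Prop) (z : Cpoint) : Prop :=
  forall j, (j < d)%nat -> ((I j -> z j = (0, 0)) /\ (~ I j -> Cnz (z j))).

(* n = ker pi, pi(e_j) = X_j *)
Definition inKerPi (n d : nat) (X : nat -> nat -> R) (Y : nat -> R) : Prop :=
  forall k, (k < n)%nat -> fsum d (fun j => Y j * X j k) = 0.

(* exp(iY) . z = (e^{-2 pi Y_1} z_1, ..., e^{-2 pi Y_d} z_d) *)
Definition orbitA (n d : nat) (X : nat -> nat -> R) (z : Cpoint) (w : Cpoint) : Prop :=
  exists Y, inKerPi n d X Y /\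
    forall j, (j < d)%nat -> w j = Cscale (exp (- (2 * PI * Y j))) (z j).

(* Euclidean topology on C^d (via the equivalent sup-norm on coordinates j < d) *)
Definition close (d : nat) (eps : R) (w v : Cpoint) : Prop :=
  forall j, (j < d)%nat ->
    Rabs (fst (w j) - fst (v j)) < eps /\ Rabs (snd (w j) - snd (v j)) < eps.

Definition adherent (d : nat) (S : Cpoint -> Prop) (w : Cpoint) : Prop :=
  forall eps, eps > 0 -> exists s, S s /\ close d eps s w.

Definition closureIn (d : nat) (U S : Cpoint -> Prop) (w : Cpoint) : Prop :=
  U w /\ adherent d S w.

Definition closedIn (d : nat) (U S : Cpoint -> Prop) : Prop :=
  forall w, U w -> adherent d S w -> S w.

(* The proof rests on three facts:
   (1) a limit point w of A z is a single translate of z on the support of w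
       (adherent_kernel_rep): the logarithmic moduli of w relative to z are limits of
       elements of ker pi, and Farkas' lemma shows that such limits extend to ker pi;
   (2) if mu1, mu2 in Delta are active on the zeros of z, resp. of w, then mu1 is active
       on the zeros of w (adherent_zeros_active), because sum_j Y_j (<mu,X_j> - lam_j)
       does not depend on mu as Y ranges over ker pi;
   (3) for the minimal face G containing the zeros of z there is Y in ker pi supported on
       G and positive where z does not vanish on G (minimal_face_kernel, by Farkas' lemma
       and a perturbation inside Delta), and flowing along Y pushes z to zeroOn G z.
   Hence the orbit is closed iff the zero set of z is a face (orbit_closed_of_face,
   face_of_orbit_closed), and A (zeroOn G z) is the unique closed orbit in the closure of
   A z (closed_orbit_in_closure). *)
From Stdlib Require Import Reals List.
From Stdlib Require Import Lra Lia Wf_nat ClassicalEpsilon Classical.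
Open Scope R_scope.

Lemma fsum_0 (f : nat -> R) : fsum 0 f = 0.
Proof. reflexivity. Qed.

Lemma fsum_S (n : nat) (f : nat -> R) : fsum (S n) f = fsum n f + f n.
Proof.
  assert (Hacc : forall (l : list R) a, fold_right Rplus a l = fold_right Rplus 0 l + a).
  { induction l as [|x l IH]; intros a; simpl; [ring | rewrite IH; ring]. }
  unfold fsum. rewrite seq_S, map_app, fold_right_app. simpl. rewrite Hacc. ring.
Qed.

Lemma fsum_ext (n : nat) (f g : nat -> R) :
  (forall i, (i < n)%nat -> f i = g i) -> fsum n f = fsum n g.
Proof.
  induction n as [|n IH]; intros H; [reflexivity|].
  rewrite !fsum_S, IH by (intros; apply H; lia). rewrite H by lia. reflexivity.
Qed.

Lemma fsum_lin (n : nat) (f g h : nat -> R) (x y : R) :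
  (forall i, (i < n)%nat -> h i = x * f i + y * g i) -> fsum n h = x * fsum n f + y * fsum n g.
Proof.
  induction n as [|n IH]; intros H; [rewrite !fsum_0; ring|].
  rewrite !fsum_S, IH by (intros; apply H; lia). rewrite H by lia. ring.
Qed.

Lemma fsum_plus (n : nat) (f g : nat -> R) : fsum n (fun i => f i + g i) = fsum n f + fsum n g.
Proof. rewrite (fsum_lin n f g _ 1 1) by (intros; ring). ring. Qed.

Lemma fsum_scal (n : nat) (f : nat -> R) (c : R) : fsum n (fun i => c * f i) = c * fsum n f.
Proof. rewrite (fsum_lin n f f _ c 0) by (intros; ring). ring. Qed.

Lemma fsum_zero (n : nat) (f : nat -> R) : (forall i, (i < n)%nat -> f i = 0) -> fsum n f = 0.
Proof. intros H. rewrite (fsum_lin n f f f 0 0) by (intros; rewrite H; auto; ring). ring. Qed.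

Lemma fsum_le (n : nat) (f g : nat -> R) :
  (forall i, (i < n)%nat -> f i <= g i) -> fsum n f <= fsum n g.
Proof.
  induction n as [|n IH]; intros H; [rewrite !fsum_0; lra|].
  rewrite !fsum_S. specialize (IH ltac:(intros; apply H; lia)). specialize (H n ltac:(lia)). lra.
Qed.

Lemma fsum_nonneg (n : nat) (f : nat -> R) : (forall i, (i < n)%nat -> 0 <= f i) -> 0 <= fsum n f.
Proof. intros H. rewrite <- (fsum_zero n (fun _ => 0)) by auto. apply fsum_le. auto. Qed.

Lemma fsum_ge_term (n : nat) (f : nat -> R) (j : nat) :
  (forall i, (i < n)%nat -> 0 <= f i) -> (j < n)%nat -> f j <= fsum n f.
Proof.
  induction n as [|n IH]; intros H Hj; [lia|].
  rewrite fsum_S. destruct (Nat.eq_dec j n) as [->|Hne].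
  - pose proof (fsum_nonneg n f ltac:(intros; apply H; lia)). lra.
  - pose proof (IH ltac:(intros; apply H; lia) ltac:(lia)). specialize (H n ltac:(lia)). lra.
Qed.

Lemma fsum_swap (n m : nat) (f : nat -> nat -> R) :
  fsum n (fun i => fsum m (fun j => f i j)) = fsum m (fun j => fsum n (fun i => f i j)).
Proof.
  induction n as [|n IH].
  - rewrite fsum_0. symmetry. apply fsum_zero. intros. apply fsum_0.
  - rewrite fsum_S, IH, <- fsum_plus. apply fsum_ext. intros. rewrite fsum_S. reflexivity.
Qed.

Lemma fsum_add (a b : nat) (f : nat -> R) :
  fsum (a + b) f = fsum a f + fsum b (fun i => f (a + i)%nat).
Proof.
  induction b as [|b IH].
  - rewrite Nat.add_0_r, fsum_0. ring.
  - rewrite Nat.add_succ_r, !fsum_S, IH. ring.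
Qed.

Lemma fsum_abs (n : nat) (f : nat -> R) : Rabs (fsum n f) <= fsum n (fun i => Rabs (f i)).
Proof.
  induction n as [|n IH]; [rewrite !fsum_0, Rabs_R0; lra|].
  rewrite !fsum_S. pose proof (Rabs_triang (fsum n f) (f n)). lra.
Qed.

Lemma fsum_single (n j0 : nat) (g : nat -> R) : (j0 < n)%nat ->
  fsum n (fun j => (if Nat.eq_dec j j0 then 1 else 0) * g j) = g j0.
Proof.
  induction n as [|n IH]; intros H; [lia|]. rewrite fsum_S.
  destruct (Nat.eq_dec n j0) as [->|Hne].
  - rewrite (fsum_zero j0); [ring|]. intros i Hi. destruct (Nat.eq_dec i j0); [lia|ring].
  - rewrite IH by lia. ring.
Qed.

Lemma fsum_sq_zero (n : nat) (f : nat -> R) :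
  fsum n (fun k => f k * f k) <= 0 -> forall k, (k < n)%nat -> f k = 0.
Proof.
  intros H k Hk.
  pose proof (fsum_ge_term n (fun k => f k * f k) k ltac:(intros; nra) Hk). cbn beta in *. nra.
Qed.

Lemma pairing_lin1 (n : nat) (u v w : nat -> R) (x y : R) :
  pairing n (fun k => x * u k + y * v k) w = x * pairing n u w + y * pairing n v w.
Proof. unfold pairing. apply fsum_lin. intros. ring. Qed.

Lemma pairing_lin2 (n : nat) (u v w : nat -> R) (x y : R) :
  pairing n u (fun k => x * v k + y * w k) = x * pairing n u v + y * pairing n u w.
Proof. unfold pairing. apply fsum_lin. intros. ring. Qed.

Lemma pairing_opp (n : nat) (u v : nat -> R) : pairing n u (fun k => - v k) = - pairing n u v.
Proof. unfold pairing. rewrite (fsum_lin n (fun k => u k * v k) (fun k => u k * v k) _ (-1) 0) by (intros; ring). ring. Qed.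

Definition dualConeCond (n m : nat) (a : nat -> nat -> R) (b : nat -> R) : Prop :=
  forall u, (forall i, (i < m)%nat -> pairing n u (a i) >= 0) -> pairing n u b >= 0.

Definition inCone (n m : nat) (a : nat -> nat -> R) (b : nat -> R) : Prop :=
  exists c, (forall i, (i < m)%nat -> c i >= 0) /\
            forall k, (k < n)%nat -> b k = fsum m (fun i => c i * a i k).

(* Without generators, the dual-cone condition forces b = 0 (test it on u = -b). *)
Lemma farkas_no_generators (n : nat) (a : nat -> nat -> R) (b : nat -> R) :
  dualConeCond n 0 a b -> inCone n 0 a b.
Proof.
  intros H. exists (fun _ => 0). split; [intros; lia|]. intros k Hk. rewrite fsum_0.
  specialize (H (fun k => - b k) ltac:(intros; lia)).
  apply (fsum_sq_zero n b); auto. unfold pairing in H.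
  rewrite (fsum_lin n (fun k => b k * b k) (fun k => b k * b k) _ (-1) 0) in H by (intros; ring). lra.
Qed.

Section FarkasStep.
  (* Elimination of the last generator am = a m along a witness u0 with u0.am < 0:
     every vector v is sheared to v - (u0.v / u0.am) am, which is orthogonal to u0. *)
  Variables (n m : nat) (a : nat -> nat -> R) (b u0 : nat -> R).
  Hypothesis Hp : pairing n u0 (a m) < 0.

  Let p : R := pairing n u0 (a m).
  Let shear (v : nat -> R) : nat -> R := fun k => 1 * v k + (- (pairing n u0 v / p)) * a m k.

  Lemma farkas_reduce : dualConeCond n (S m) a b -> dualConeCond n m (fun i => shear (a i)) (shear b).
  Proof.
    intros H u Hu.
    set (u' := fun k => 1 * u k + (- (pairing n u (a m) / p)) * u0 k).
    assert (Hu' : forall v, pairing n u' v = pairing n u (shear v)).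
    { intros v. unfold u', shear. rewrite pairing_lin1, pairing_lin2. field. unfold p. lra. }
    rewrite <- Hu'. apply H. intros i Hi. rewrite Hu'.
    destruct (Nat.eq_dec i m) as [->|Hne]; [|apply Hu; lia].
    unfold shear. rewrite pairing_lin2. fold p. replace (1 * pairing n u (a m) + - (p / p) * pairing n u (a m)) with 0
      by (field; unfold p; lra). lra.
  Qed.

  Lemma farkas_lift :
    (forall i, (i < m)%nat -> pairing n u0 (a i) >= 0) -> pairing n u0 b < 0 ->
    inCone n m (fun i => shear (a i)) (shear b) -> inCone n (S m) a b.
  Proof.
    intros Hu0a Hu0b [c [Hc Hrep]].
    set (S0 := fsum m (fun i => c i * pairing n u0 (a i))).
    assert (HS0 : 0 <= S0) by (apply fsum_nonneg; intros i Hi; specialize (Hc i Hi); specialize (Hu0a i Hi); nra).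
    set (t := (pairing n u0 b - S0) / p).
    assert (Ht : t >= 0).
    { assert (Htp : t * p = pairing n u0 b - S0) by (unfold t; field; unfold p; lra). fold p in Hp. nra. }
    exists (fun i => if Nat.eq_dec i m then t else c i). split.
    - intros i Hi. destruct (Nat.eq_dec i m); [lra | apply Hc; lia].
    - intros k Hk. rewrite fsum_S. destruct (Nat.eq_dec m m) as [_|]; [|congruence].
      rewrite (fsum_ext m _ (fun i => c i * a i k)) by (intros i Hi; destruct (Nat.eq_dec i m); [lia|reflexivity]).
      specialize (Hrep k Hk). unfold shear in Hrep.
      rewrite (fsum_lin m (fun i => c i * a i k) (fun i => c i * pairing n u0 (a i)) _ 1 (- a m k / p)) in Hrep
        by (intros; field; unfold p; lra).
      fold S0 in Hrep. unfold t. apply (Rplus_eq_reg_l (- (pairing n u0 b / p) * a m k)).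
      transitivity (1 * b k + - (pairing n u0 b / p) * a m k); [ring|]. rewrite Hrep. field. unfold p. lra.
  Qed.
End FarkasStep.

Lemma farkas (n m : nat) (a : nat -> nat -> R) (b : nat -> R) :
  dualConeCond n m a b -> inCone n m a b.
Proof.
  revert a b. induction m as [|m IH]; intros a b H; [apply farkas_no_generators; auto|].
  destruct (classic (dualConeCond n m a b)) as [Hm|Hm].
  - destruct (IH a b Hm) as [c [Hc Hrep]].
    exists (fun i => if Nat.eq_dec i m then 0 else c i). split.
    + intros i Hi. destruct (Nat.eq_dec i m); [lra | apply Hc; lia].
    + intros k Hk. rewrite fsum_S, Hrep by auto. destruct (Nat.eq_dec m m) as [_|]; [|congruence].
      rewrite Rmult_0_l, Rplus_0_r. apply fsum_ext. intros i Hi. destruct (Nat.eq_dec i m); [lia|reflexivity].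
  - apply not_all_ex_not in Hm as [u0 Hu0]. apply imply_to_and in Hu0 as [Hu0a Hu0b].
    apply Rnot_ge_lt in Hu0b.
    assert (Hp : pairing n u0 (a m) < 0).
    { apply Rnot_ge_lt. intros Hge. apply (Rlt_not_ge _ _ Hu0b), H. intros i Hi.
      destruct (Nat.eq_dec i m) as [->|Hne]; [auto | apply Hu0a; lia]. }
    apply (farkas_lift n m a b u0 Hp Hu0a Hu0b), IH, farkas_reduce; auto.
Qed.

Lemma farkas_mixed (n m : nat) (a : nat -> nat -> R) (E : nat -> Prop) (b : nat -> R) :
  (forall u, (forall i, (i < m)%nat -> E i -> pairing n u (a i) = 0) ->
             (forall i, (i < m)%nat -> ~ E i -> pairing n u (a i) >= 0) -> pairing n u b >= 0) ->
  exists c, (forall i, (i < m)%nat -> ~ E i -> c i >= 0) /\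
            forall k, (k < n)%nat -> b k = fsum m (fun i => c i * a i k).
Proof.
  intros H.
  (* generators a_i (i < m) followed by -a_i for i in E and by 0 otherwise *)
  set (neg := fun i k => if excluded_middle_informative (E i) then - a i k else 0).
  set (a2 := fun i => if Nat.ltb i m then a i else neg (i - m)%nat).
  assert (Hlo : forall i, (i < m)%nat -> a2 i = a i).
  { intros i Hi. unfold a2. destruct (Nat.ltb_spec i m); [reflexivity|lia]. }
  assert (Hhi : forall i, a2 (m + i)%nat = neg i).
  { intros i. unfold a2. destruct (Nat.ltb_spec (m + i) m); [lia|]. f_equal. lia. }
  destruct (farkas n (m + m) a2 b) as [c2 [Hc2 Hrep]].
  { intros u Hu. apply H; intros i Hi HEi; pose proof (Hu i ltac:(lia)) as Hpos; rewrite Hlo in Hpos by auto.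
    - pose proof (Hu (m + i)%nat ltac:(lia)) as Hneg. rewrite Hhi in Hneg. unfold neg in Hneg.
      destruct (excluded_middle_informative (E i)) as [_|]; [|contradiction].
      change (pairing n u (fun k => - a i k) >= 0) in Hneg. rewrite pairing_opp in Hneg. lra.
    - exact Hpos. }
  exists (fun i => c2 i - (if excluded_middle_informative (E i) then c2 (m + i)%nat else 0)). split.
  - intros i Hi HE. destruct (excluded_middle_informative (E i)); [contradiction|].
    specialize (Hc2 i ltac:(lia)). lra.
  - intros k Hk. rewrite Hrep, fsum_add by auto. rewrite <- fsum_plus. apply fsum_ext. intros i Hi.
    rewrite Hlo, Hhi by auto. unfold neg. destruct (excluded_middle_informative (E i)); ring.
Qed.

Lemma uniform_lower_bound (d : nat) (P : nat -> Prop) (g : nat -> R) :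
  (forall j, (j < d)%nat -> P j -> 0 < g j) -> exists e, 0 < e /\ forall j, (j < d)%nat -> P j -> e <= g j.
Proof.
  induction d as [|d IH]; intros H; [exists 1; split; [lra | intros; lia]|].
  destruct IH as [e [He Hle]]; [intros; apply H; auto; lia|].
  destruct (classic (P d)) as [Pd|nPd].
  - exists (Rmin e (g d)). split; [apply Rmin_glb_lt; auto; apply H; auto|].
    intros j Hj Pj. destruct (Nat.eq_dec j d) as [->|Hne]; [apply Rmin_r|].
    eapply Rle_trans; [apply Rmin_l | apply Hle; auto; lia].
  - exists e. split; auto. intros j Hj Pj. destruct (Nat.eq_dec j d) as [->|Hne]; [contradiction|].
    apply Hle; auto; lia.
Qed.

Lemma uniform_upper_bound (d : nat) (g : nat -> R) : exists t, forall j, (j < d)%nat -> g j <= t.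
Proof.
  exists (fsum d (fun j => Rabs (g j))). intros j Hj.
  eapply Rle_trans; [apply Rle_abs|]. apply (fsum_ge_term d (fun j => Rabs (g j))); auto.
  intros; apply Rabs_pos.
Qed.

Definition cnorm (c : R * R) : R := Rabs (fst c) + Rabs (snd c).

Lemma cnorm_nonneg (c : R * R) : 0 <= cnorm c.
Proof. unfold cnorm. pose proof (Rabs_pos (fst c)). pose proof (Rabs_pos (snd c)). lra. Qed.

Lemma cnorm_components (c : R * R) : Rabs (fst c) <= cnorm c /\ Rabs (snd c) <= cnorm c.
Proof. unfold cnorm. pose proof (Rabs_pos (fst c)). pose proof (Rabs_pos (snd c)). lra. Qed.

Lemma cnorm_scale (t : R) (c : R * R) : 0 <= t -> cnorm (Cscale t c) = t * cnorm c.
Proof. intros. unfold cnorm, Cscale; simpl. rewrite !Rabs_mult, Rabs_pos_eq by auto. ring. Qed.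

Lemma cnorm_origin : cnorm (0, 0) = 0.
Proof. unfold cnorm; simpl. rewrite Rabs_R0. ring. Qed.

Lemma cnorm_eq0 (c : R * R) : cnorm c = 0 -> c = (0, 0).
Proof.
  destruct c as [x y]. unfold cnorm; simpl. intros H.
  pose proof (Rabs_pos x). pose proof (Rabs_pos y).
  destruct (Req_dec_T x 0) as [->|Hx]; [|pose proof (Rabs_pos_lt x Hx); lra].
  destruct (Req_dec_T y 0) as [->|Hy]; [|pose proof (Rabs_pos_lt y Hy); lra]. reflexivity.
Qed.

Lemma cnorm_pos (c : R * R) : Cnz c -> cnorm c > 0.
Proof.
  intros H. pose proof (cnorm_nonneg c).
  destruct (Req_dec_T (cnorm c) 0) as [e|e]; [apply cnorm_eq0 in e; contradiction | lra].
Qed.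

Lemma Cscale_0 (t : R) : Cscale t (0, 0) = (0, 0).
Proof. unfold Cscale; simpl. f_equal; ring. Qed.

Lemma Cscale_1 (c : R * R) : Cscale 1 c = c.
Proof. destruct c. unfold Cscale; simpl. f_equal; ring. Qed.

Lemma Cscale_nz (t : R) (c : R * R) : t > 0 -> Cnz c -> Cnz (Cscale t c).
Proof.
  intros Ht Hc E. apply Hc.
  destruct c as [x y]. unfold Cscale in E; simpl in E. injection E as Ex Ey.
  apply Rmult_integral in Ex as [|]; apply Rmult_integral in Ey as [|]; subst; try lra; reflexivity.
Qed.

Lemma close_cnorm (d : nat) (eps : R) (s w : Cpoint) (j : nat) :
  close d eps s w -> (j < d)%nat -> Rabs (cnorm (s j) - cnorm (w j)) < 2 * eps.
Proof.
  intros H Hj. destruct (H j Hj) as [Hre Him]. unfold cnorm. apply Rabs_def1.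
  - pose proof (Rabs_triang_inv (fst (s j)) (fst (w j))).
    pose proof (Rabs_triang_inv (snd (s j)) (snd (w j))). lra.
  - pose proof (Rabs_triang_inv (fst (w j)) (fst (s j))).
    pose proof (Rabs_triang_inv (snd (w j)) (snd (s j))).
    rewrite Rabs_minus_sym in Hre, Him. lra.
Qed.

(* The factor by which exp(iY) rescales a coordinate with Y_j = y, and its
   inverse level a = -ln a / 2pi. *)
Definition weight (y : R) : R := exp (- (2 * PI * y)).
Definition level (a : R) : R := - ln a / (2 * PI).

Lemma weight_pos (y : R) : 0 < weight y.
Proof. apply exp_pos. Qed.

Lemma weight_0 : weight 0 = 1.
Proof. unfold weight. rewrite Rmult_0_r, Ropp_0. apply exp_0. Qed.

Lemma weight_level (a : R) : 0 < a -> weight (level a) = a.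
Proof.
  intros H. pose proof PI_RGT_0. unfold weight, level.
  replace (- (2 * PI * (- ln a / (2 * PI)))) with (ln a) by (field; lra). apply exp_ln; auto.
Qed.

Lemma weight_lt_iff (x y : R) : weight x < weight y <-> y < x.
Proof.
  pose proof PI_RGT_0. unfold weight. split; intros Hlt.
  - apply exp_lt_inv in Hlt. nra.
  - apply exp_increasing. nra.
Qed.

Lemma weight_lt_level_iff (a y : R) : 0 < a -> (weight y < a <-> level a < y).
Proof. intros H. rewrite <- (weight_level a H) at 1. apply weight_lt_iff. Qed.

Lemma level_lt_weight_iff (a y : R) : 0 < a -> (a < weight y <-> y < level a).
Proof. intros H. rewrite <- (weight_level a H) at 1. apply weight_lt_iff. Qed.

Lemma orbitA_weights (n d : nat) (X : nat -> nat -> R) (z w : Cpoint) : orbitA n d X z w ->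
  exists Y, inKerPi n d X Y /\ forall j, (j < d)%nat -> w j = Cscale (weight (Y j)) (z j).
Proof. exact (fun H => H). Qed.

Lemma orbitA_intro (n d : nat) (X : nat -> nat -> R) (z w : Cpoint) (Y : nat -> R) : inKerPi n d X Y ->
  (forall j, (j < d)%nat -> w j = Cscale (weight (Y j)) (z j)) -> orbitA n d X z w.
Proof. intros HY Hw. exists Y. split; auto. Qed.

Lemma orbit_refl (n d : nat) (X : nat -> nat -> R) (w : Cpoint) : orbitA n d X w w.
Proof.
  apply (orbitA_intro n d X w w (fun _ => 0)).
  - intros k Hk. apply fsum_zero. intros. ring.
  - intros. rewrite weight_0, Cscale_1. reflexivity.
Qed.

Lemma pairing_fsum (n d : nat) (X : nat -> nat -> R) (f u : nat -> R) :
  pairing n u (fun k => fsum d (fun j => f j * X j k)) = fsum d (fun j => f j * pairing n u (X j)).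
Proof.
  unfold pairing.
  rewrite (fsum_ext d _ (fun j => fsum n (fun k => f j * (u k * X j k)))) by (intros; rewrite fsum_scal; reflexivity).
  rewrite <- fsum_swap. apply fsum_ext. intros k Hk. rewrite <- fsum_scal. apply fsum_ext. intros; ring.
Qed.

Lemma ker_pairing (n d : nat) (X : nat -> nat -> R) (Y mu : nat -> R) :
  inKerPi n d X Y -> fsum d (fun j => Y j * pairing n mu (X j)) = 0.
Proof.
  intros H. rewrite <- pairing_fsum. unfold pairing. apply fsum_zero. intros k Hk. rewrite H by auto. ring.
Qed.

Lemma ker_lin (n d : nat) (X : nat -> nat -> R) (Y1 Y2 : nat -> R) (x y : R) :
  inKerPi n d X Y1 -> inKerPi n d X Y2 -> inKerPi n d X (fun j => x * Y1 j + y * Y2 j).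
Proof.
  intros HY1 HY2 k Hk. rewrite (fsum_lin d (fun j => Y1 j * X j k) (fun j => Y2 j * X j k) _ x y)
    by (intros; ring). rewrite HY1, HY2 by auto. ring.
Qed.

Lemma ker_slack (n d : nat) (X : nat -> nat -> R) (lam Y mu1 mu2 : nat -> R) : inKerPi n d X Y ->
  fsum d (fun j => Y j * (pairing n mu1 (X j) - lam j)) = fsum d (fun j => Y j * (pairing n mu2 (X j) - lam j)).
Proof.
  intros H.
  assert (E : forall mu, fsum d (fun j => Y j * (pairing n mu (X j) - lam j)) = - fsum d (fun j => Y j * lam j)).
  { intros mu. rewrite (fsum_lin d (fun j => Y j * pairing n mu (X j)) (fun j => Y j * lam j) _ 1 (-1))
      by (intros; ring). rewrite ker_pairing by auto. ring. }
  rewrite !E. reflexivity.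
Qed.

Lemma orbit_in_CdDelta (n d : nat) (X : nat -> nat -> R) (lam : nat -> R) (w v : Cpoint) :
  inCdDelta n d X lam w -> orbitA n d X w v -> inCdDelta n d X lam v.
Proof.
  intros [I [HI Hw]] Hv. destruct (orbitA_weights n d X w v Hv) as [Y [_ HY]].
  exists I. split; auto. intros j Hj HnI. rewrite HY by auto. apply Cscale_nz; [apply weight_pos | auto].
Qed.

Lemma ker_extension (n d : nat) (X : nat -> nat -> R) (S : nat -> Prop) (y : nat -> R) :
  (forall u, (forall j, (j < d)%nat -> ~ S j -> pairing n u (X j) = 0) ->
     fsum d (fun j => (if excluded_middle_informative (S j) then y j else 0) * pairing n u (X j)) = 0) ->
  exists Y, inKerPi n d X Y /\ forall j, (j < d)%nat -> S j -> Y j = y j.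
Proof.
  intros H.
  set (yS := fun j => if excluded_middle_informative (S j) then y j else 0).
  set (a := fun j k => if excluded_middle_informative (S j) then 0 else X j k).
  destruct (farkas_mixed n d a (fun _ => True) (fun k => - fsum d (fun j => yS j * X j k)))
    as [c [_ Hrep]].
  { intros u Hu _. rewrite pairing_opp, pairing_fsum, H; [lra|].
    intros j Hj HS. specialize (Hu j Hj I). unfold a in Hu.
    destruct (excluded_middle_informative (S j)); [contradiction | exact Hu]. }
  exists (fun j => yS j + (if excluded_middle_informative (S j) then 0 else c j)). split.
  - intros k Hk. rewrite (fsum_lin d (fun j => yS j * X j k) (fun j => c j * a j k) _ 1 1).
    + rewrite <- Hrep by auto. ring.
    + intros j Hj. unfold a. destruct (excluded_middle_informative (S j)); ring.
  - intros j Hj HS. unfold yS. destruct (excluded_middle_informative (S j)); [ring | contradiction].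
Qed.

Lemma limit_of_scaled (a N x W : R) : N > 0 -> Rabs a <= N ->
  (forall eps, eps > 0 -> exists E, Rabs (E * a - x) < eps /\ Rabs (E * N - W) < 2 * eps) ->
  x = (W / N) * a.
Proof.
  intros HN Ha H. apply cond_eq. intros eps He.
  destruct (H (eps / 3) ltac:(lra)) as [E [Hx HW]].
  replace (x - W / N * a) with (- (E * a - x) + (E * N - W) * (a / N)) by (field; lra).
  eapply Rle_lt_trans; [apply Rabs_triang|]. rewrite Rabs_Ropp, Rabs_mult.
  assert (Hquot : Rabs (a / N) <= 1).
  { unfold Rdiv. rewrite Rabs_mult, Rabs_inv, (Rabs_pos_eq N) by lra.
    apply (Rmult_le_reg_r N); auto. rewrite Rmult_assoc, Rinv_l by lra. lra. }
  pose proof (Rabs_pos (E * N - W)). nra.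
Qed.

Section OrbitLimits.
  Variables (n d : nat) (X : nat -> nat -> R) (z w : Cpoint).
  Hypothesis Hadh : adherent d (orbitA n d X z) w.

  Lemma adherent_moduli (eps : R) : eps > 0 -> exists Y, inKerPi n d X Y /\
    forall j, (j < d)%nat -> Rabs (weight (Y j) * cnorm (z j) - cnorm (w j)) < 2 * eps.
  Proof.
    intros He. destruct (Hadh eps He) as [s [Hs Hc]]. destruct (orbitA_weights n d X z s Hs) as [Y [HY Hscale]].
    exists Y. split; auto. intros j Hj.
    rewrite <- cnorm_scale, <- Hscale by (auto; left; apply weight_pos). apply (close_cnorm d eps); auto.
  Qed.

  Lemma adherent_zeros (j : nat) : (j < d)%nat -> z j = (0, 0) -> w j = (0, 0).
  Proof.
    intros Hj Hz. apply cnorm_eq0, cond_eq. intros eps He.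
    destruct (adherent_moduli (eps / 2) ltac:(lra)) as [Y [_ HY]]. specialize (HY j Hj).
    rewrite Hz, cnorm_origin, Rmult_0_r, Rminus_0_l, Rabs_Ropp in HY. rewrite Rminus_0_r. lra.
  Qed.

  Lemma adherent_direction (j : nat) : (j < d)%nat -> Cnz (w j) ->
    cnorm (z j) > 0 /\ w j = Cscale (cnorm (w j) / cnorm (z j)) (z j).
  Proof.
    intros Hj Hw.
    assert (HNz : cnorm (z j) > 0) by (apply cnorm_pos; intros Hz; exact (Hw (adherent_zeros j Hj Hz))).
    split; auto.
    assert (Happrox : forall eps, eps > 0 -> exists E, Rabs (E * fst (z j) - fst (w j)) < eps /\
              Rabs (E * snd (z j) - snd (w j)) < eps /\ Rabs (E * cnorm (z j) - cnorm (w j)) < 2 * eps).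
    { intros eps He. destruct (Hadh eps He) as [s [Hs Hc]]. destruct (orbitA_weights n d X z s Hs) as [Y [_ Hscale]].
      exists (weight (Y j)). pose proof (close_cnorm d eps s w j Hc Hj) as Hn.
      destruct (Hc j Hj) as [Hre Him]. rewrite Hscale in Hn, Hre, Him by auto.
      rewrite cnorm_scale in Hn by (left; apply weight_pos). auto. }
    destruct (cnorm_components (z j)) as [Hfst Hsnd].
    destruct (w j) as [w1 w2]. unfold Cscale. f_equal; simpl; apply limit_of_scaled; auto;
      intros eps He; destruct (Happrox eps He) as [E [Hre [Him Hmod]]]; exists E; auto.
  Qed.

  Lemma adherent_log_bounds : exists L U : nat -> R, forall T, exists Y, inKerPi n d X Y /\
    (forall j, (j < d)%nat -> Cnz (z j) -> L j <= Y j) /\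
    (forall j, (j < d)%nat -> Cnz (w j) -> Y j <= U j) /\
    (forall j, (j < d)%nat -> Cnz (z j) -> w j = (0, 0) -> T <= Y j).
  Proof.
    exists (fun j => level ((cnorm (w j) + 2) / cnorm (z j))), (fun j => level (cnorm (w j) / (2 * cnorm (z j)))).
    intros T.
    destruct (uniform_lower_bound d (fun j => Cnz (w j)) (fun j => cnorm (w j) / 4)) as [e1 [He1 Hle1]].
    { intros j Hj Hw. pose proof (cnorm_pos _ Hw). lra. }
    destruct (uniform_lower_bound d (fun j => Cnz (z j)) (fun j => cnorm (z j) * weight T / 2)) as [e2 [He2 Hle2]].
    { intros j Hj Hz. pose proof (cnorm_pos _ Hz). pose proof (weight_pos T). nra. }
    set (eps := Rmin 1 (Rmin e1 e2)).
    assert (He : eps > 0) by (repeat apply Rmin_glb_lt; lra).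
    assert (Heps1 : eps <= 1) by apply Rmin_l.
    assert (Heps_w : forall j, (j < d)%nat -> Cnz (w j) -> eps <= cnorm (w j) / 4).
    { intros j Hj Hw. specialize (Hle1 j Hj Hw). pose proof (Rmin_r 1 (Rmin e1 e2)) as Hm.
      pose proof (Rmin_l e1 e2). fold eps in Hm. lra. }
    assert (Heps_z : forall j, (j < d)%nat -> Cnz (z j) -> eps <= cnorm (z j) * weight T / 2).
    { intros j Hj Hz. specialize (Hle2 j Hj Hz). pose proof (Rmin_r 1 (Rmin e1 e2)) as Hm.
      pose proof (Rmin_r e1 e2). fold eps in Hm. lra. }
    destruct (adherent_moduli eps He) as [Y [HY Hmod]]. exists Y. split; [auto|].
    split; [|split]; intros j Hj Hnz; [| |intros Hw0];
      specialize (Hmod j Hj); apply Rabs_def2 in Hmod as [Hup Hlo].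
    - pose proof (cnorm_pos _ Hnz). pose proof (cnorm_nonneg (w j)).
      left. apply weight_lt_level_iff; [apply Rdiv_lt_0_compat; lra|].
      apply (Rmult_lt_reg_r (cnorm (z j))); auto. unfold Rdiv. rewrite Rmult_assoc, Rinv_l by lra. lra.
    - assert (Hz : Cnz (z j)) by (intros Hz; exact (Hnz (adherent_zeros j Hj Hz))).
      pose proof (cnorm_pos _ Hnz). pose proof (cnorm_pos _ Hz). specialize (Heps_w j Hj Hnz).
      left. apply level_lt_weight_iff; [apply Rdiv_lt_0_compat; lra|].
      apply (Rmult_lt_reg_r (cnorm (z j))); auto.
      replace (cnorm (w j) / (2 * cnorm (z j)) * cnorm (z j)) with (cnorm (w j) / 2) by (field; lra). lra.
    - pose proof (cnorm_pos _ Hnz). specialize (Heps_z j Hj Hnz). rewrite Hw0, cnorm_origin in Hup.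
      left. apply weight_lt_iff. apply (Rmult_lt_reg_r (cnorm (z j))); auto. lra.
  Qed.

  (* Otherwise,
     pushing Y_j0 to +oo at a coordinate with z_j0 <> 0 = w_j0 and inactive mu1 makes
     sum_j Y_j slack1_j unbounded, while it equals sum_j Y_j slack2_j, which stays bounded. *)
  Lemma adherent_zeros_active (lam mu1 mu2 : nat -> R) :
    inDelta n d X lam mu1 -> inDelta n d X lam mu2 ->
    (forall j, (j < d)%nat -> z j = (0, 0) -> pairing n mu1 (X j) = lam j) ->
    (forall j, (j < d)%nat -> w j = (0, 0) -> pairing n mu2 (X j) = lam j) ->
    forall j0, (j0 < d)%nat -> w j0 = (0, 0) -> pairing n mu1 (X j0) = lam j0.
  Proof.
    intros Hmu1 Hmu2 Hz Hw j0 Hj0 Hwj0.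
    destruct (classic (z j0 = (0, 0))) as [Hzj0|Hzj0]; [auto|]. apply NNPP. intros Hne.
    set (v1 := fun j => pairing n mu1 (X j) - lam j). set (v2 := fun j => pairing n mu2 (X j) - lam j).
    assert (Hv1 : forall j, (j < d)%nat -> 0 <= v1 j) by (intros j Hj; specialize (Hmu1 j Hj); unfold v1; lra).
    assert (Hv2 : forall j, (j < d)%nat -> 0 <= v2 j) by (intros j Hj; specialize (Hmu2 j Hj); unfold v2; lra).
    assert (Hv1j0 : v1 j0 > 0) by (specialize (Hmu1 j0 Hj0); unfold v1; lra).
    destruct adherent_log_bounds as [L [U Hbounds]].
    set (SL := fsum d (fun j => L j * v1 j)). set (SU := fsum d (fun j => U j * v2 j)).
    destruct (Hbounds (L j0 + (SU - SL) / v1 j0 + 1)) as [Y [HY [HL [HU HT]]]].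
    specialize (HT j0 Hj0 Hzj0 Hwj0).
    assert (Hupper : fsum d (fun j => Y j * v2 j) <= SU).
    { apply fsum_le. intros j Hj. destruct (classic (w j = (0, 0))) as [Hw0|Hw0].
      - unfold v2. rewrite Hw by auto. lra.
      - apply Rmult_le_compat_r; auto. }
    assert (Hlower : (Y j0 - L j0) * v1 j0 <= fsum d (fun j => Y j * v1 j) - SL).
    { replace (fsum d (fun j => Y j * v1 j) - SL) with (fsum d (fun j => (Y j - L j) * v1 j))
        by (unfold SL; rewrite (fsum_lin d (fun j => Y j * v1 j) (fun j => L j * v1 j) _ 1 (-1)) by (intros; ring); ring).
      apply (fsum_ge_term d (fun j => (Y j - L j) * v1 j)); auto. intros j Hj.
      destruct (classic (z j = (0, 0))) as [Hz0|Hz0].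
      - unfold v1. rewrite Hz by auto. lra.
      - apply Rmult_le_pos; [specialize (HL j Hj Hz0); lra | auto]. }
    assert (Hgap : (Y j0 - L j0) * v1 j0 >= SU - SL + v1 j0).
    { replace (SU - SL + v1 j0) with (((SU - SL) / v1 j0 + 1) * v1 j0) by (field; lra).
      apply Rle_ge, Rmult_le_compat_r; lra. }
    assert (Hslack : fsum d (fun j => Y j * v1 j) = fsum d (fun j => Y j * v2 j))
      by exact (ker_slack n d X lam Y mu1 mu2 HY).
    lra.
  Qed.

  Lemma adherent_log_approx (delta : R) : delta > 0 -> exists Y, inKerPi n d X Y /\
    forall j, (j < d)%nat -> Cnz (w j) -> Rabs (Y j - level (cnorm (w j) / cnorm (z j))) < delta.
  Proof.
    intros Hdelta.
    set (y := fun j => level (cnorm (w j) / cnorm (z j))).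
    set (gap := fun j => Rmin (weight (y j - delta) - weight (y j)) (weight (y j) - weight (y j + delta))).
    assert (Hgap : forall j, 0 < gap j).
    { intros j. assert (Hlo : weight (y j) < weight (y j - delta)) by (apply weight_lt_iff; lra).
      assert (Hhi : weight (y j + delta) < weight (y j)) by (apply weight_lt_iff; lra).
      apply Rmin_glb_lt; lra. }
    assert (Hy : forall j, (j < d)%nat -> Cnz (w j) -> weight (y j) * cnorm (z j) = cnorm (w j)).
    { intros j Hj Hw. destruct (adherent_direction j Hj Hw) as [HNz _].
      unfold y. rewrite weight_level by (apply Rdiv_lt_0_compat; [apply cnorm_pos | ]; auto). field. lra. }
    destruct (uniform_lower_bound d (fun j => Cnz (w j)) (fun j => cnorm (z j) * gap j / 2)) as [eps [He Hle]].
    { intros j Hj Hw. destruct (adherent_direction j Hj Hw) as [HNz _].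
      specialize (Hgap j). nra. }
    destruct (adherent_moduli eps He) as [Y [HY Hmod]].
    exists Y. split; auto. intros j Hj Hw. change (Rabs (Y j - y j) < delta).
    destruct (adherent_direction j Hj Hw) as [HNz _].
    specialize (Hmod j Hj). specialize (Hle j Hj Hw). rewrite <- (Hy j Hj Hw) in Hmod.
    assert (Hclose : Rabs (weight (Y j) - weight (y j)) < gap j).
    { apply (Rmult_lt_reg_r (cnorm (z j))); auto.
      replace (Rabs (weight (Y j) - weight (y j)) * cnorm (z j))
        with (Rabs (weight (Y j) * cnorm (z j) - weight (y j) * cnorm (z j)))
        by (rewrite <- (Rabs_pos_eq (cnorm (z j))) at 3 by lra; rewrite <- Rabs_mult; f_equal; ring).
      lra. }
    apply Rabs_def2 in Hclose as [Hc1 Hc2].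
    assert (Hgl : gap j <= weight (y j - delta) - weight (y j)) by apply Rmin_l.
    assert (Hgr : gap j <= weight (y j) - weight (y j + delta)) by apply Rmin_r.
    assert (Hlo : weight (Y j) < weight (y j - delta)) by lra.
    assert (Hhi : weight (y j + delta) < weight (Y j)) by lra.
    apply (proj1 (weight_lt_iff _ _)) in Hlo, Hhi. apply Rabs_def1; lra.
  Qed.

  (* The logarithmic moduli level (|w_j| / |z_j|) on the support of w are orthogonal to
     every form vanishing on the X_j with w_j = 0: they are limits of elements of ker pi. *)
  Lemma log_moduli_orthogonal (u : nat -> R) :
    (forall j, (j < d)%nat -> ~ Cnz (w j) -> pairing n u (X j) = 0) ->
    fsum d (fun j => (if excluded_middle_informative (Cnz (w j)) then level (cnorm (w j) / cnorm (z j)) else 0)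
                     * pairing n u (X j)) = 0.
  Proof.
    intros Hu. set (yS := fun j => if excluded_middle_informative (Cnz (w j)) then level (cnorm (w j) / cnorm (z j)) else 0).
    set (p := fun j => pairing n u (X j)). change (fsum d (fun j => yS j * p j) = 0).
    apply cond_eq. intros delta Hdelta. rewrite Rminus_0_r.
    set (P := fsum d (fun j => Rabs (p j)) + 1).
    assert (HP : P > 0) by (pose proof (fsum_nonneg d (fun j => Rabs (p j)) ltac:(intros; apply Rabs_pos)); unfold P; lra).
    destruct (adherent_log_approx (delta / P) ltac:(apply Rdiv_lt_0_compat; lra)) as [Y [HY HYy]].
    (* sum_j Y_j p_j = 0, so sum_j yS_j p_j = sum_j (yS_j - Y_j) p_j, with small terms *)
    rewrite (fsum_lin d (fun j => (yS j - Y j) * p j) (fun j => Y j * p j) _ 1 1) by (intros; ring).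
    replace (fsum d (fun j => Y j * p j)) with 0 by (symmetry; exact (ker_pairing n d X Y u HY)).
    rewrite Rmult_0_r, Rplus_0_r, Rmult_1_l.
    eapply Rle_lt_trans; [apply fsum_abs|].
    apply Rle_lt_trans with (fsum d (fun j => delta / P * Rabs (p j))).
    - apply fsum_le. intros j Hj. unfold yS. rewrite Rabs_mult.
      destruct (excluded_middle_informative (Cnz (w j))) as [Hw|Hw].
      + apply Rmult_le_compat_r; [apply Rabs_pos|]. rewrite Rabs_minus_sym. left. apply HYy; auto.
      + unfold p. rewrite Hu, Rabs_R0 by auto. lra.
    - rewrite fsum_scal. replace delta with (delta / P * P) at 2 by (field; lra).
      apply Rmult_lt_compat_l; [apply Rdiv_lt_0_compat|unfold P]; lra.
  Qed.

  Lemma adherent_kernel_rep : exists Y, inKerPi n d X Y /\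
    forall j, (j < d)%nat -> Cnz (w j) -> w j = Cscale (weight (Y j)) (z j).
  Proof.
    destruct (ker_extension n d X (fun j => Cnz (w j)) (fun j => level (cnorm (w j) / cnorm (z j))))
      as [Y [HY HYy]]; [exact log_moduli_orthogonal|].
    exists Y. split; auto. intros j Hj Hw.
    destruct (adherent_direction j Hj Hw) as [HNz Hdir].
    rewrite HYy by auto. rewrite weight_level by (apply Rdiv_lt_0_compat; [apply cnorm_pos|]; auto).
    exact Hdir.
  Qed.
End OrbitLimits.

Definition subsetBelow (d : nat) (I J : nat -> Prop) : Prop := forall j, (j < d)%nat -> I j -> J j.

Fixpoint countBelow (d : nat) (P : nat -> Prop) : nat :=
  match d with
  | O => O
  | S d' => (countBelow d' P + if excluded_middle_informative (P d') then 1 else 0)%nat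
  end.

Lemma countBelow_le (d : nat) (P Q : nat -> Prop) :
  subsetBelow d P Q -> (countBelow d P <= countBelow d Q)%nat.
Proof.
  induction d as [|d IH]; simpl; intros H; [lia|].
  specialize (IH ltac:(intros j Hj; apply H; lia)).
  destruct (excluded_middle_informative (P d)), (excluded_middle_informative (Q d)); try lia.
  exfalso. auto.
Qed.

Lemma countBelow_lt (d : nat) (P Q : nat -> Prop) : subsetBelow d P Q ->
  (exists j, (j < d)%nat /\ Q j /\ ~ P j) -> (countBelow d P < countBelow d Q)%nat.
Proof.
  induction d as [|d IH]; simpl; intros H [j [Hj [HQ HP]]]; [lia|].
  assert (Hs : subsetBelow d P Q) by (intros i Hi; apply H; lia).
  destruct (Nat.eq_dec j d) as [->|Hne].
  - pose proof (countBelow_le d P Q Hs).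
    destruct (excluded_middle_informative (P d)); [contradiction|].
    destruct (excluded_middle_informative (Q d)); [lia|contradiction].
  - assert (Hlt : (countBelow d P < countBelow d Q)%nat) by (apply IH; auto; exists j; repeat split; auto; lia).
    destruct (excluded_middle_informative (P d)), (excluded_middle_informative (Q d)); try lia.
    exfalso. auto.
Qed.

Definition minimalFace (n d : nat) (X : nat -> nat -> R) (lam : nat -> R) (Z G : nat -> Prop) : Prop :=
  isFaceIndex n d X lam G /\ subsetBelow d Z G /\
  forall G', isFaceIndex n d X lam G' -> subsetBelow d Z G' -> subsetBelow d G' G -> subsetBelow d G G'.

(* Faces are finitely many, so a face containing Z contains a minimal one. *)
Lemma minimal_face_exists (n d : nat) (X : nat -> nat -> R) (lam : nat -> R) (Z I0 : nat -> Prop) :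
  isFaceIndex n d X lam I0 -> subsetBelow d Z I0 -> exists G, minimalFace n d X lam Z G.
Proof.
  remember (countBelow d I0) as k eqn:Hk. revert I0 Hk.
  induction k as [k IH] using lt_wf_ind. intros I Hk HI HZ.
  destruct (classic (forall G', isFaceIndex n d X lam G' -> subsetBelow d Z G' -> subsetBelow d G' I ->
                                subsetBelow d I G')) as [Hmin|Hmin].
  - exists I. repeat split; auto.
  - apply not_all_ex_not in Hmin as [G' Hmin].
    apply imply_to_and in Hmin as [HG' Hmin]. apply imply_to_and in Hmin as [HZG' Hmin].
    apply imply_to_and in Hmin as [HG'I Hmin].
    apply not_all_ex_not in Hmin as [j Hmin]. apply imply_to_and in Hmin as [Hj Hmin].
    apply imply_to_and in Hmin as [HIj HG'j].
    apply (IH (countBelow d G')) with G'; auto. subst k. apply countBelow_lt; eauto.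
Qed.

Definition activeIndex (n : nat) (X : nat -> nat -> R) (lam mu : nat -> R) (j : nat) : Prop :=
  pairing n mu (X j) = lam j.

Lemma face_of_point (n d : nat) (X : nat -> nat -> R) (lam mu : nat -> R) :
  inDelta n d X lam mu -> isFaceIndex n d X lam (activeIndex n X lam mu).
Proof. intros H. exists mu. split; auto. intros j Hj. unfold activeIndex. tauto. Qed.

Lemma perturb_in_Delta (n d : nat) (X : nat -> nat -> R) (lam mu u : nat -> R) :
  inDelta n d X lam mu ->
  (forall j, (j < d)%nat -> activeIndex n X lam mu j -> pairing n u (X j) >= 0) ->
  exists mu', inDelta n d X lam mu' /\
    forall j, (j < d)%nat -> (activeIndex n X lam mu' j <-> activeIndex n X lam mu j /\ pairing n u (X j) = 0).
Proof.
  intros Hmu Hu. unfold activeIndex in *.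
  set (slack := fun j => pairing n mu (X j) - lam j).
  destruct (uniform_lower_bound d (fun j => ~ activeIndex n X lam mu j)
              (fun j => slack j / (Rabs (pairing n u (X j)) + 1))) as [t [Ht Htle]].
  { intros j Hj Hna. unfold activeIndex in Hna. specialize (Hmu j Hj).
    pose proof (Rabs_pos (pairing n u (X j))). apply Rdiv_lt_0_compat; unfold slack; lra. }
  exists (fun k => 1 * mu k + t * u k).
  assert (E : forall j, pairing n (fun k => 1 * mu k + t * u k) (X j) = pairing n mu (X j) + t * pairing n u (X j))
    by (intros; rewrite pairing_lin1; ring).
  assert (Hinact : forall j, (j < d)%nat -> pairing n mu (X j) <> lam j ->
                     pairing n mu (X j) + t * pairing n u (X j) > lam j).
  { intros j Hj Hna. specialize (Htle j Hj Hna). specialize (Hmu j Hj).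
    set (p := pairing n u (X j)) in *. pose proof (Rabs_pos p). pose proof (Rle_abs (- p)) as Hneg.
    rewrite Rabs_Ropp in Hneg.
    assert (Hbound : t * (Rabs p + 1) <= slack j).
    { apply (Rmult_le_compat_r (Rabs p + 1)) in Htle; [|lra].
      replace (slack j / (Rabs p + 1) * (Rabs p + 1)) with (slack j) in Htle by (field; lra). exact Htle. }
    unfold slack in Hbound. nra. }
  split.
  - intros j Hj. rewrite E. destruct (Req_dec_T (pairing n mu (X j)) (lam j)) as [Ha|Hna].
    + specialize (Hu j Hj Ha). nra.
    + specialize (Hinact j Hj Hna). lra.
  - intros j Hj. rewrite E. destruct (Req_dec_T (pairing n mu (X j)) (lam j)) as [Ha|Hna].
    + rewrite Ha. split; [intros Heq; split; auto | intros [_ ->]; ring].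
      assert (Hzero : t * pairing n u (X j) = 0) by lra. apply Rmult_integral in Hzero as [|]; [lra|auto].
    + specialize (Hinact j Hj Hna). split; [lra | tauto].
Qed.

Section MinimalFaceKernel.
  Variables (n d : nat) (X : nat -> nat -> R) (lam : nat -> R) (Z G : nat -> Prop) (muG : nat -> R).
  Hypothesis HmuG : activeSet n d X lam G muG.
  Hypothesis HG : minimalFace n d X lam Z G.

  (* No form u that vanishes on Z and is nonnegative on G \ Z can be positive on some X_j0, j0 in G:
     moving muG along u would cut out a smaller face still containing Z. *)
  Lemma minimal_face_no_escape (u : nat -> R) (j0 : nat) : (j0 < d)%nat -> G j0 ->
    (forall j, (j < d)%nat -> Z j -> pairing n u (X j) = 0) ->
    (forall j, (j < d)%nat -> G j -> ~ Z j -> pairing n u (X j) >= 0) ->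
    pairing n u (X j0) <= 0.
  Proof.
    intros Hj0 HGj0 HuZ HuG. destruct HmuG as [Hin Hact]. destruct HG as [_ [HZG Hmin]].
    destruct (perturb_in_Delta n d X lam muG u Hin) as [mu' [Hmu' Hact']].
    { intros j Hj Ha. apply Hact in Ha; auto. destruct (classic (Z j)) as [HZ|HZ].
      - rewrite HuZ by auto. lra.
      - apply HuG; auto. }
    assert (HGsub : subsetBelow d G (activeIndex n X lam mu')).
    { apply Hmin; [apply face_of_point; auto | |].
      - intros j Hj HZ. apply (Hact' j Hj). split; [apply (Hact j Hj), HZG | apply HuZ]; auto.
      - intros j Hj Ha. apply (Hact' j Hj) in Ha as [Ha _]. apply (Hact j Hj). exact Ha. }
    apply Hact' in Hj0 as Hj0'. destruct (proj1 Hj0' (HGsub j0 Hj0 HGj0)) as [_ ->]. lra.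
  Qed.

  Lemma minimal_face_kernel_at (j0 : nat) : (j0 < d)%nat -> G j0 -> ~ Z j0 ->
    exists Y, inKerPi n d X Y /\ (forall j, (j < d)%nat -> ~ G j -> Y j = 0) /\
              (forall j, (j < d)%nat -> G j -> ~ Z j -> Y j >= 0) /\ Y j0 > 0.
  Proof.
    intros Hj0 HGj0 HZj0. destruct HG as [_ [HZG _]].
    set (a := fun j k => if excluded_middle_informative (G j) then X j k else 0).
    assert (Ha : forall u j, G j -> pairing n u (a j) = pairing n u (X j)).
    { intros u j Hj. unfold a. destruct (excluded_middle_informative (G j)); [reflexivity | contradiction]. }
    destruct (farkas_mixed n d a Z (fun k => - X j0 k)) as [c [Hc Hrep]].
    { intros u HuZ HuG. rewrite pairing_opp. cut (pairing n u (X j0) <= 0); [lra|].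
      apply minimal_face_no_escape; auto.
      - intros j Hj HZ. rewrite <- Ha by (apply HZG; auto). auto.
      - intros j Hj HGj HZ. rewrite <- Ha by auto. auto. }
    set (delta := fun j => if Nat.eq_dec j j0 then 1 else 0).
    exists (fun j => (if excluded_middle_informative (G j) then c j else 0) + delta j).
    split; [|split; [|split]].
    - intros k Hk.
      rewrite (fsum_lin d (fun j => c j * a j k) (fun j => delta j * X j k) _ 1 1)
        by (intros j Hj; unfold a; destruct (excluded_middle_informative (G j)); ring).
      unfold delta. rewrite fsum_single, <- Hrep by auto. ring.
    - intros j Hj HGj. destruct (excluded_middle_informative (G j)); [contradiction|].
      unfold delta. destruct (Nat.eq_dec j j0) as [->|]; [contradiction | ring].
    - intros j Hj HGj HZ. destruct (excluded_middle_informative (G j)); [|contradiction].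
      specialize (Hc j Hj HZ). unfold delta. destruct (Nat.eq_dec j j0); lra.
    - destruct (excluded_middle_informative (G j0)); [|contradiction].
      specialize (Hc j0 Hj0 HZj0). unfold delta. destruct (Nat.eq_dec j0 j0); [lra | congruence].
  Qed.
End MinimalFaceKernel.

Lemma positive_combination (d : nat) (K : (nat -> R) -> Prop) (P : nat -> Prop) :
  K (fun _ => 0) -> (forall Y1 Y2, K Y1 -> K Y2 -> K (fun j => Y1 j + Y2 j)) ->
  (forall j0, (j0 < d)%nat -> P j0 -> exists Y, K Y /\ (forall j, (j < d)%nat -> P j -> Y j >= 0) /\ Y j0 > 0) ->
  exists Y, K Y /\ forall j, (j < d)%nat -> P j -> Y j > 0.
Proof.
  intros K0 Kadd Hpt.
  assert (Hm : forall m, exists Y, K Y /\ (forall j, (j < d)%nat -> P j -> Y j >= 0) /\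
                                 (forall j, (j < m)%nat -> (j < d)%nat -> P j -> Y j > 0)).
  { induction m as [|m [Y [HK [Hnn Hpos]]]].
    - exists (fun _ => 0). repeat split; auto; intros; [lra | lia].
    - destruct (classic ((m < d)%nat /\ P m)) as [[Hmd HPm]|Hno].
      + destruct (Hpt m Hmd HPm) as [Y' [HK' [Hnn' Hpos']]].
        exists (fun j => Y j + Y' j). split; [auto|split].
        * intros j Hj HP. specialize (Hnn j Hj HP). specialize (Hnn' j Hj HP). lra.
        * intros j Hjm Hj HP. specialize (Hnn j Hj HP). specialize (Hnn' j Hj HP).
          destruct (Nat.eq_dec j m) as [->|Hne]; [lra|]. specialize (Hpos j ltac:(lia) Hj HP). lra.
      + exists Y. repeat split; auto. intros j Hjm Hj HP.
        destruct (Nat.eq_dec j m) as [->|Hne]; [tauto | apply Hpos; auto; lia]. }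
  destruct (Hm d) as [Y [HK [_ Hpos]]]. exists Y. split; auto.
Qed.

Lemma minimal_face_kernel (n d : nat) (X : nat -> nat -> R) (lam : nat -> R) (Z G : nat -> Prop) (muG : nat -> R) :
  activeSet n d X lam G muG -> minimalFace n d X lam Z G ->
  exists Y, inKerPi n d X Y /\ (forall j, (j < d)%nat -> ~ G j -> Y j = 0) /\
            (forall j, (j < d)%nat -> G j -> ~ Z j -> Y j > 0).
Proof.
  intros HmuG HG.
  destruct (positive_combination d (fun Y => inKerPi n d X Y /\ forall j, (j < d)%nat -> ~ G j -> Y j = 0)
              (fun j => G j /\ ~ Z j)) as [Y [[HY HYG] Hpos]].
  - split; [intros k Hk; apply fsum_zero; intros; ring | auto].
  - intros Y1 Y2 [HY1 HY1G] [HY2 HY2G]. split.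
    + intros k Hk. rewrite (fsum_lin d (fun j => Y1 j * X j k) (fun j => Y2 j * X j k) _ 1 1) by (intros; ring).
      rewrite HY1, HY2 by auto. ring.
    + intros j Hj HGj. rewrite HY1G, HY2G by auto. ring.
  - intros j0 Hj0 [HGj0 HZj0].
    destruct (minimal_face_kernel_at n d X lam Z G muG HmuG HG j0 Hj0 HGj0 HZj0) as [Y [HY [HYG [Hnn Hpos]]]].
    exists Y. split; [split; auto | split; auto]. intros j Hj [HGj HZj]. auto.
  - exists Y. split; [auto | split; [auto | intros j Hj HGj HZj; apply Hpos; auto]].
Qed.

Definition zeroSet (z : Cpoint) (j : nat) : Prop := z j = (0, 0).

Definition zeroOn (G : nat -> Prop) (z : Cpoint) : Cpoint :=
  fun j => if excluded_middle_informative (G j) then (0, 0) else z j.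

Lemma zeroOn_CstarFc (d : nat) (G : nat -> Prop) (z : Cpoint) :
  subsetBelow d (zeroSet z) G -> inCstarFc d G (zeroOn G z).
Proof.
  intros HZG j Hj. unfold zeroOn. destruct (excluded_middle_informative (G j)) as [HG|HG].
  - split; [reflexivity | contradiction].
  - split; [contradiction|]. intros _ Hz. apply HG, HZG; auto.
Qed.

Lemma CstarFc_CdDelta (n d : nat) (X : nat -> nat -> R) (lam : nat -> R) (I : nat -> Prop) (z : Cpoint) :
  isFaceIndex n d X lam I -> inCstarFc d I z -> inCdDelta n d X lam z.
Proof. intros HI Hz. exists I. split; auto. intros j Hj. apply Hz; auto. Qed.

Lemma CstarFc_zeroSet (d : nat) (I : nat -> Prop) (z : Cpoint) (j : nat) :
  inCstarFc d I z -> (j < d)%nat -> (zeroSet z j <-> I j).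
Proof.
  intros Hz Hj. destruct (Hz j Hj) as [HIzero HInz]. split; [|exact HIzero].
  intros Hzero. apply NNPP. intros HI. exact (HInz HI Hzero).
Qed.

Lemma CdDelta_zeros (n d : nat) (X : nat -> nat -> R) (lam : nat -> R) (z : Cpoint) :
  inCdDelta n d X lam z -> exists I mu, activeSet n d X lam I mu /\ subsetBelow d (zeroSet z) I.
Proof.
  intros [I [[mu Hmu] Hz]]. exists I, mu. split; auto.
  intros j Hj Hzero. apply NNPP. intros HI. exact (Hz j Hj HI Hzero).
Qed.

(* Pushing z to +oo along Y (positive on G \ zeros, zero off G) shows that the whole
   orbit of zeroOn G z lies in the closure of A z. *)
Lemma zeroOn_orbit_adherent (n d : nat) (X : nat -> nat -> R) (z : Cpoint) (G : nat -> Prop) (Y : nat -> R) :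
  subsetBelow d (zeroSet z) G -> inKerPi n d X Y ->
  (forall j, (j < d)%nat -> ~ G j -> Y j = 0) -> (forall j, (j < d)%nat -> G j -> ~ zeroSet z j -> Y j > 0) ->
  forall v, orbitA n d X (zeroOn G z) v -> adherent d (orbitA n d X z) v.
Proof.
  intros HZG HY HYG HYpos v Hv eps Heps. destruct (orbitA_weights n d X _ v Hv) as [Y' [HY' Hv']].
  destruct (uniform_upper_bound d (fun j => (Rabs (level (eps / cnorm (z j)) - Y' j) + 1) / Y j)) as [t Ht].
  exists (fun j => Cscale (weight (Y' j + t * Y j)) (z j)). split.
  - apply (orbitA_intro n d X z _ (fun j => 1 * Y' j + t * Y j)); [apply ker_lin; auto|].
    intros j Hj. rewrite Rmult_1_l. reflexivity.
  - intros j Hj. rewrite Hv' by auto. unfold zeroOn.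
    destruct (excluded_middle_informative (G j)) as [HGj|HGj].
    + rewrite Cscale_0. destruct (classic (zeroSet z j)) as [Hz|Hz].
      { rewrite Hz, Cscale_0. simpl. rewrite Rminus_0_r, Rabs_R0. lra. }
      pose proof (cnorm_pos _ Hz) as HNz. specialize (HYpos j Hj HGj Hz). specialize (Ht j Hj).
      (* t Y_j exceeds |level (eps/|z_j|) - Y'_j|, so the coordinate has modulus < eps *)
      assert (Hlevel : level (eps / cnorm (z j)) < Y' j + t * Y j).
      { apply (Rmult_le_compat_r (Y j)) in Ht; [|lra].
        replace ((Rabs (level (eps / cnorm (z j)) - Y' j) + 1) / Y j * Y j)
          with (Rabs (level (eps / cnorm (z j)) - Y' j) + 1) in Ht by (field; lra).
        pose proof (Rle_abs (level (eps / cnorm (z j)) - Y' j)). lra. }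
      apply weight_lt_level_iff in Hlevel; [|apply Rdiv_lt_0_compat; lra].
      assert (Hsmall : cnorm (Cscale (weight (Y' j + t * Y j)) (z j)) < eps).
      { rewrite cnorm_scale by (left; apply weight_pos).
        apply (Rmult_lt_compat_r (cnorm (z j))) in Hlevel; auto.
        replace (eps / cnorm (z j) * cnorm (z j)) with eps in Hlevel by (field; lra). lra. }
      destruct (cnorm_components (Cscale (weight (Y' j + t * Y j)) (z j))) as [Hre Him].
      cbn [fst snd]. rewrite !Rminus_0_r. split; lra.
    + rewrite HYG, Rmult_0_r, Rplus_0_r by auto. rewrite !Rminus_diag_eq, Rabs_R0 by auto. lra.
Qed.

(* (<=) If z lies in the stratum (C^* )^{I^c} of a face I, its orbit is closed: a limit
   point w in C^d_Delta has the same zeros as z (the zeros of w are active for a point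
   of the face I), hence is a single translate of z. *)
Lemma orbit_closed_of_face (n d : nat) (X : nat -> nat -> R) (lam : nat -> R) (I : nat -> Prop) (z : Cpoint) :
  isFaceIndex n d X lam I -> inCstarFc d I z -> closedIn d (inCdDelta n d X lam) (orbitA n d X z).
Proof.
  intros [mu [Hmu Hact]] Hz w Hw Hadh.
  destruct (CdDelta_zeros n d X lam w Hw) as [I2 [mu2 [[Hmu2 Hact2] HwI2]]].
  assert (Hsame : forall j, (j < d)%nat -> w j = (0, 0) -> z j = (0, 0)).
  { intros j Hj Hw0. apply (CstarFc_zeroSet d I z j Hz Hj), (Hact j Hj).
    apply (adherent_zeros_active n d X z w Hadh lam mu mu2 Hmu Hmu2); auto.
    - intros i Hi Hz0. apply (Hact i Hi), (CstarFc_zeroSet d I z i Hz Hi); auto.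
    - intros i Hi Hw0'. apply (Hact2 i Hi), HwI2; auto. }
  destruct (adherent_kernel_rep n d X z w Hadh) as [Y [HY Hrep]].
  apply (orbitA_intro n d X z w Y HY). intros j Hj.
  destruct (classic (w j = (0, 0))) as [Hw0|Hw0]; [|apply Hrep; auto].
  rewrite Hw0, (Hsame j Hj Hw0), Cscale_0. reflexivity.
Qed.

Lemma minimal_face_setup (n d : nat) (X : nat -> nat -> R) (lam : nat -> R) (z : Cpoint) :
  inCdDelta n d X lam z ->
  exists G muG Y, activeSet n d X lam G muG /\ minimalFace n d X lam (zeroSet z) G /\
    inKerPi n d X Y /\ (forall j, (j < d)%nat -> ~ G j -> Y j = 0) /\
    (forall j, (j < d)%nat -> G j -> ~ zeroSet z j -> Y j > 0).
Proof.
  intros Hz. destruct (CdDelta_zeros n d X lam z Hz) as [I0 [mu0 [Hmu0 HZI0]]].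
  destruct (minimal_face_exists n d X lam (zeroSet z) I0 (ex_intro _ mu0 Hmu0) HZI0) as [G HG].
  destruct (proj1 HG) as [muG HmuG].
  destruct (minimal_face_kernel n d X lam (zeroSet z) G muG HmuG HG) as [Y HYprops].
  exists G, muG, Y. auto.
Qed.

(* (=>) If the orbit is closed, z lies in the stratum of the minimal face G containing
   its zeros: otherwise zeroOn G z, a limit point with more zeros, would lie in A z. *)
Lemma face_of_orbit_closed (n d : nat) (X : nat -> nat -> R) (lam : nat -> R) (z : Cpoint) :
  inCdDelta n d X lam z -> closedIn d (inCdDelta n d X lam) (orbitA n d X z) ->
  exists I, isFaceIndex n d X lam I /\ inCstarFc d I z.
Proof.
  intros Hz Hclosed.
  destruct (minimal_face_setup n d X lam z Hz) as [G [muG [Y [HmuG [HG [HY [HYG HYpos]]]]]]].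
  destruct HG as [HGface [HZG _]].
  exists G. split; auto. intros j Hj. split; [|intros HGj Hzero; apply HGj, HZG; auto].
  intros HGj. apply NNPP. intros Hzj.
  assert (Hlim : orbitA n d X z (zeroOn G z)).
  { apply Hclosed.
    - apply (CstarFc_CdDelta n d X lam G); auto. apply zeroOn_CstarFc; auto.
    - apply (zeroOn_orbit_adherent n d X z G Y); auto. apply orbit_refl. }
  destruct (orbitA_weights n d X z _ Hlim) as [Y2 [_ HY2]]. specialize (HY2 j Hj).
  unfold zeroOn in HY2. destruct (excluded_middle_informative (G j)) as [_|]; [|contradiction].
  apply (f_equal cnorm) in HY2. rewrite cnorm_origin, cnorm_scale in HY2 by (left; apply weight_pos).
  pose proof (weight_pos (Y2 j)). pose proof (cnorm_pos (z j) Hzj). nra.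
Qed.

(* A closed orbit in the closure of A z is the orbit of zeroOn G z: its zero set is a face
   between the zeros of z and G, hence equal to G by minimality. *)
Lemma closed_orbit_in_closure (n d : nat) (X : nat -> nat -> R) (lam : nat -> R) (z : Cpoint)
    (G : nat -> Prop) (muG : nat -> R) (w : Cpoint) :
  activeSet n d X lam G muG -> minimalFace n d X lam (zeroSet z) G ->
  inCdDelta n d X lam w -> adherent d (orbitA n d X z) w ->
  closedIn d (inCdDelta n d X lam) (orbitA n d X w) -> orbitA n d X (zeroOn G z) w.
Proof.
  intros [HmuG HactG] [_ [HZG Hmin]] Hw Hadh Hclosed.
  destruct (face_of_orbit_closed n d X lam w Hw Hclosed) as [I [[mu [Hmu Hact]] HwI]].
  assert (HIG : subsetBelow d I G).
  { intros j Hj HI. apply (HactG j Hj).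
    apply (adherent_zeros_active n d X z w Hadh lam muG mu HmuG Hmu); auto.
    - intros i Hi Hz. apply (HactG i Hi), HZG; auto.
    - intros i Hi Hw0. apply (Hact i Hi), (CstarFc_zeroSet d I w i HwI Hi); auto.
    - apply (CstarFc_zeroSet d I w j HwI Hj); auto. }
  assert (HGI : subsetBelow d G I).
  { apply Hmin; auto; [exists mu; split; auto|].
    intros j Hj Hz. apply (CstarFc_zeroSet d I w j HwI Hj), (adherent_zeros n d X z w Hadh); auto. }
  destruct (adherent_kernel_rep n d X z w Hadh) as [Y [HY Hrep]].
  apply (orbitA_intro n d X _ w Y HY). intros j Hj. unfold zeroOn.
  destruct (excluded_middle_informative (G j)) as [HGj|HGj].
  - rewrite Cscale_0. apply (CstarFc_zeroSet d I w j HwI Hj), HGI; auto.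
  - apply Hrep; auto. apply (HwI j Hj). intros HI. apply HGj, HIG; auto.
Qed.

(* Theorem 3.  The argument does not use the standing polytope hypotheses hDelta
   (boundedness, full dimension, irredundant facets). *)
Theorem mainTheorem3 (n d : nat) (X : nat -> nat -> R) (lam : nat -> R)
  (hDelta : isPolytopeData n d X lam)
  (z : Cpoint) (hz : inCdDelta n d X lam z) :
  (closedIn d (inCdDelta n d X lam) (orbitA n d X z) <->
     exists I, isFaceIndex n d X lam I /\ inCstarFc d I z) /\
  (~ closedIn d (inCdDelta n d X lam) (orbitA n d X z) ->
     exists w,
       inCdDelta n d X lam w /\
       (forall v, orbitA n d X w v -> closureIn d (inCdDelta n d X lam) (orbitA n d X z) v) /\
       closedIn d (inCdDelta n d X lam) (orbitA n d X w) /\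
       (forall w', inCdDelta n d X lam w' ->
          (forall v, orbitA n d X w' v -> closureIn d (inCdDelta n d X lam) (orbitA n d X z) v) ->
          closedIn d (inCdDelta n d X lam) (orbitA n d X w') ->
          orbitA n d X w w')).
Proof.
  split.
  - split; [apply face_of_orbit_closed; auto|].
    intros [I [HI Hz]]. apply (orbit_closed_of_face n d X lam I); auto.
  - intros _.
    destruct (minimal_face_setup n d X lam z hz) as [G [muG [Y [HmuG [HG [HY [HYG HYpos]]]]]]].
    assert (HGstratum : inCstarFc d G (zeroOn G z)) by (apply zeroOn_CstarFc, HG).
    assert (HGface : isFaceIndex n d X lam G) by (exists muG; auto).
    assert (Hw : inCdDelta n d X lam (zeroOn G z)) by (apply (CstarFc_CdDelta n d X lam G); auto).
    exists (zeroOn G z). split; [auto | split; [| split]].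
    + intros v Hv. split; [apply (orbit_in_CdDelta n d X lam (zeroOn G z)); auto|].
      apply (zeroOn_orbit_adherent n d X z G Y); auto. apply HG.
    + apply (orbit_closed_of_face n d X lam G); auto.
    + intros w' Hw' Hcl' Hclosed'. apply (closed_orbit_in_closure n d X lam z G muG); auto.
      apply (Hcl' w' (orbit_refl n d X w')).
Qed.
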